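(* Under the hypotheses of Theorem 1 (regular spherically symmetric asymptotically flat Einstein–Maxwell data, electrovacuum outside the ball $\mathcal{B}=\{l\le l_0\}$ of area radius $\mathcal{R}$, dominant energy condition in $\mathcal{B}$, total charge $Q\ne0$, ADM mass $M$), suppose $M\ge |Q|$ and the exterior region $\{l\ge l_0\}$ is untrapped. Then $\mathcal{R}> r_+:=M+\sqrt{M^2-Q^2}\ge |Q|$; in particular $\mathcal{R}>|Q|$. If instead $M\ge|Q|$ and the exterior region is not untrapped, the horizon is the sphere at the largest $l_1\ge l_0$ with $r(l_1)=r_+$, and its area radius is $\mathcal{R}_0=r_+$.
   Context: Metric $dl^2+r(l)^2(d\theta^2+\sin^2\theta d\phi^2)$ on $\mathbb{R}^3$, $r(0)=0$, $r'(0)=1$; $K_{ij}=n_in_jK_l+(h_{ij}-n_in_j)K_r$. Null expansions $\theta^\pm=\frac2r(r'\pm K_rr)$; a region is untrapped if $\theta^+\theta^->0$ there, trapped if $\theta^+\theta^-<0$; a horizon is the outer boundary of a trapped region ($\theta^+\theta^-=0$ there). Asymptotic flatness gives $r(l)\to\infty$ as $l\to\infty$. Electrovacuum: no non-electromagnetic matter, no momentum density, no charge density; no magnetic field. Charge $Q=E(l_0)r(l_0)^2$ where $E$ is the radial electric field. *)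

From Stdlib Require Import Reals Lra.
Open Scope R_scope.

(* Spherically symmetric initial data on R^3:
   metric dl^2 + r(l)^2 dOmega^2,  K = n n K_l + (h - n n) K_r,
   radial electric field E, no magnetic field.  Units G = c = 1 (Gaussian).
   dr, ddr are the first and second derivatives of r, dKr of Kr, dE of E. *)

Definition scal (r dr ddr : R -> R) (l : R) : R :=
  2 / (r l)^2 * (1 - (dr l)^2 - 2 * r l * ddr l).

(* Non-electromagnetic energy density from the Hamiltonian constraint:
   16 pi mu = R + (tr K)^2 - |K|^2 - 2 (E^2 + B^2),  B = 0,
   with tr K = Kl + 2 Kr, |K|^2 = Kl^2 + 2 Kr^2. *)
Definition mu (r dr ddr Kl Kr E : R -> R) (l : R) : R :=
  (scal r dr ddr l + (Kl l + 2 * Kr l)^2 - ((Kl l)^2 + 2 * (Kr l)^2)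
     - 2 * (E l)^2) / (16 * PI).

(* Radial component of the non-electromagnetic momentum density from the
   momentum constraint  D^j (K_ij - tr K h_ij) = 8 pi J_i  (Poynting vector
   vanishes since B = 0). *)
Definition Jmom (r dr Kl Kr dKr : R -> R) (l : R) : R :=
  (2 * dr l / r l * (Kl l - Kr l) - 2 * dKr l) / (8 * PI).

(* Charge density from Gauss's law div E = 4 pi rho_e. *)
Definition rho_e (r dr E dE : R -> R) (l : R) : R :=
  (2 * r l * dr l * E l + (r l)^2 * dE l) / (4 * PI * (r l)^2).

Definition theta_plus (r dr Kr : R -> R) (l : R) : R :=
  2 / r l * (dr l + Kr l * r l).
Definition theta_minus (r dr Kr : R -> R) (l : R) : R :=
  2 / r l * (dr l - Kr l * r l).
Definition theta_prod (r dr Kr : R -> R) (l : R) : R :=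
  theta_plus r dr Kr l * theta_minus r dr Kr l.

Definition untrapped_exterior (r dr Kr : R -> R) (l0 : R) : Prop :=
  forall l, l0 <= l -> 0 < theta_prod r dr Kr l.

(* A horizon (outer boundary of the (possibly marginally) trapped region):
   theta+ theta- = 0 at the sphere l1, and everything outside is untrapped. *)
Definition is_horizon (r dr Kr : R -> R) (l1 : R) : Prop :=
  theta_prod r dr Kr l1 = 0 /\
  (forall l, l1 < l -> 0 < theta_prod r dr Kr l).

Definition hawking_mass (r dr Kr : R -> R) (l : R) : R :=
  r l / 2 * (1 - (dr l)^2 + (Kr l)^2 * (r l)^2).

(* ADM mass of spherically symmetric asymptotically flat data:
   the limit of the Hawking mass at infinity. *)
Definition is_ADM_mass (r dr Kr : R -> R) (M : R) : Prop :=
  forall eps, 0 < eps -> exists L, forall l, L <= l ->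
    Rabs (hawking_mass r dr Kr l - M) < eps.

Definition charge (r E : R -> R) (l0 : R) : R := E l0 * (r l0)^2.

Definition r_plus (M Q : R) : R := M + sqrt (M^2 - Q^2).

From Stdlib Require Import Reals Lra Classical.
Open Scope R_scope.

(** In electrovacuum the charge [Q = E r^2] and the Reissner–Nordström mass
    [m = m_H + Q^2/(2r)] of the spheres are conserved along the exterior, so
    [m] equals its limit at infinity, the ADM mass [M].  Since
    [theta+ theta- r^4 = 4 (r^2 - 2 m r + Q^2) = 4 (r - r_+) (r - r_-)],
    the exterior is untrapped exactly where [r > r_+].  As [r] is continuous
    and tends to infinity, [r > r_+] throughout the exterior unless [r] takes
    the value [r_+] there, and then the horizon is the last sphere with
    [r = r_+]. *)

Lemma derivable_pt_lim_sq f x d : derivable_pt_lim f x d ->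
  derivable_pt_lim (fun y => f y ^ 2) x (2 * f x * d).
Proof.
  intro Hf.
  apply (derivable_pt_lim_ext (fun y => f y * f y)); [intro; ring|].
  replace (2 * f x * d) with (d * f x + f x * d) by ring.
  now apply (derivable_pt_lim_mult f f).
Qed.

Lemma derivable_pt_lim_eq f x a b :
  derivable_pt_lim f x a -> a = b -> derivable_pt_lim f x b.
Proof. now intros ? <-. Qed.

(* The quotient rule leaves side goals [g x <> 0]. *)
Ltac differentiate :=
  repeat first
    [ apply derivable_pt_lim_minus | apply derivable_pt_lim_div
    | apply derivable_pt_lim_plus | apply derivable_pt_lim_sq
    | apply derivable_pt_lim_mult | apply derivable_pt_lim_const
    | match goal with
      | H : forall l, derivable_pt_lim ?f l _ |- derivable_pt_lim ?f _ _ => apply H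
      end ].

Lemma null_derivative_halfline f a : continuity_pt f a ->
  (forall c, a < c -> derivable_pt_lim f c 0) -> forall b, a <= b -> f b = f a.
Proof.
  intros Hfa Hf' b Hab.
  apply (null_derivative_loc f a b (fun c P => exist _ 0 (Hf' c (proj1 P)))).
  - intros c [Hac _]. destruct Hac as [Hac | <-]; [|exact Hfa].
    exact (derivable_continuous_pt f c (exist _ 0 (Hf' c Hac))).
  - reflexivity.
  - lra.
Qed.

Lemma limit_at_infinity_unique (f : R -> R) a b :
  (forall eps, 0 < eps -> exists L, forall l, L <= l -> Rabs (f l - a) < eps) ->
  (forall eps, 0 < eps -> exists L, forall l, L <= l -> Rabs (f l - b) < eps) ->
  a = b.
Proof.
  intros Ha Hb. apply NNPP. intro Hab.
  set (eps := Rabs (a - b) / 2).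
  assert (Heps : 0 < eps) by (assert (0 < Rabs (a - b)) by (apply Rabs_pos_lt; lra);
                             unfold eps; lra).
  destruct (Ha eps Heps) as [La HLa], (Hb eps Heps) as [Lb HLb].
  specialize (HLa (Rmax La Lb) (Rmax_l _ _)).
  specialize (HLb (Rmax La Lb) (Rmax_r _ _)).
  assert (Htri := Rabs_triang (a - f (Rmax La Lb)) (f (Rmax La Lb) - b)).
  rewrite Rabs_minus_sym in Htri.
  replace (a - f (Rmax La Lb) + (f (Rmax La Lb) - b)) with (a - b) in Htri by ring.
  unfold eps in *. lra.
Qed.

Section LevelSets.
Variable f : R -> R.
Hypothesis f_cont : continuity f.
Hypothesis f_unbounded : forall B, exists L, forall l, L <= l -> B < f l.

Lemma eventually_above v a : exists b, a <= b /\ forall x, b <= x -> v < f x.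
Proof.
  destruct (f_unbounded v) as [L HL].
  exists (Rmax a L). split; [apply Rmax_l|].
  intros x Hx. apply HL. apply Rle_trans with (Rmax a L); [apply Rmax_r | exact Hx].
Qed.

Lemma level_reached a v : f a <= v -> exists z, a <= z /\ f z = v.
Proof.
  intro Hav. destruct (eventually_above v a) as [b [Hab Hb]].
  destruct (IVT_cor (fun x => f x - v) a b) as [z [Hz Hfz]].
  - intro x. apply continuity_pt_minus; [apply f_cont | apply continuity_pt_const].
    now intros ? ?.
  - exact Hab.
  - specialize (Hb b (Rle_refl b)). nra.
  - exists z. split; lra.
Qed.

Lemma last_level a v : (exists x, a <= x /\ f x = v) ->
  exists l1, a <= l1 /\ f l1 = v /\ forall x, a <= x -> f x = v -> x <= l1.
Proof.
  intros [x0 [Hx0 Hfx0]].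
  set (S := fun x => a <= x /\ f x = v).
  assert (HS : bound S).
  { destruct (eventually_above v a) as [b [_ Hb]]. exists b.
    intros x [_ Hfx]. destruct (Rle_or_lt x b) as [|Hbx]; [assumption|].
    specialize (Hb x (Rlt_le _ _ Hbx)). lra. }
  destruct (completeness S HS) as [l1 [Hub Hlub]]; [now exists x0|].
  assert (Hx0l1 : x0 <= l1) by (apply Hub; split; assumption).
  exists l1. split; [lra|]. split; [|intros x Hax Hfx; apply Hub; split; assumption].
  apply NNPP. intro Hne.
  (* near [l1], [f] stays away from [v]; so [l1 - d] bounds [S] *)
  set (e := Rabs (f l1 - v)).
  assert (He : 0 < e) by (apply Rabs_pos_lt; lra).
  destruct (f_cont l1 e He) as [d [Hd Hnear]]. simpl in Hnear. unfold R_dist in Hnear.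
  assert (Hbound : is_upper_bound S (l1 - d)).
  { intros x [Hax Hfx]. destruct (Rle_or_lt x (l1 - d)) as [|Hx]; [assumption|].
    assert (Hxl1 : x <= l1) by (apply Hub; split; assumption).
    destruct (Req_dec x l1) as [-> | Hxne]; [lra|].
    assert (Hdist : Rabs (x - l1) < d) by (rewrite Rabs_left1; lra).
    specialize (Hnear x (conj (conj I (not_eq_sym Hxne)) Hdist)).
    rewrite Hfx, Rabs_minus_sym in Hnear. unfold e in Hnear. lra. }
  specialize (Hlub _ Hbound). lra.
Qed.

End LevelSets.

Lemma r_plus_root_factor M Q x : Q ^ 2 <= M ^ 2 ->
  x ^ 2 - 2 * M * x + Q ^ 2 = (x - r_plus M Q) * (x - (M - sqrt (M ^ 2 - Q ^ 2))).
Proof.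
  intro HQM. unfold r_plus.
  assert (Hs : sqrt (M ^ 2 - Q ^ 2) * sqrt (M ^ 2 - Q ^ 2) = M ^ 2 - Q ^ 2)
    by (apply sqrt_sqrt; lra).
  nra.
Qed.

Lemma sq_le_of_abs_le Q M : Rabs Q <= M -> Q ^ 2 <= M ^ 2.
Proof.
  intro HQM. rewrite <- (pow2_abs Q). assert (0 <= Rabs Q) by apply Rabs_pos. nra.
Qed.

Lemma abs_le_r_plus M Q : Rabs Q <= M -> Rabs Q <= r_plus M Q.
Proof. intro. unfold r_plus. assert (0 <= sqrt (M ^ 2 - Q ^ 2)) by apply sqrt_pos. lra. Qed.

Lemma rn_quadratic_pos M Q x : Rabs Q <= M -> r_plus M Q < x ->
  0 < x ^ 2 - 2 * M * x + Q ^ 2.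
Proof.
  intros HQM Hx. rewrite (r_plus_root_factor M Q x (sq_le_of_abs_le Q M HQM)).
  unfold r_plus in *. assert (0 <= sqrt (M ^ 2 - Q ^ 2)) by apply sqrt_pos.
  apply Rmult_lt_0_compat; lra.
Qed.

Lemma rn_quadratic_r_plus M Q : Rabs Q <= M ->
  r_plus M Q ^ 2 - 2 * M * r_plus M Q + Q ^ 2 = 0.
Proof.
  intro HQM. rewrite (r_plus_root_factor M Q _ (sq_le_of_abs_le Q M HQM)). ring.
Qed.

(* The mass parameter of the Reissner–Nordström sphere with the same area
   radius, charge and Hawking mass. *)
Definition rn_mass (r dr Kr : R -> R) (Q l : R) : R :=
  hawking_mass r dr Kr l + Q ^ 2 / (2 * r l).

Lemma theta_prod_rn_mass r dr Kr Q l : r l <> 0 ->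
  theta_prod r dr Kr l * r l ^ 4 = 4 * (r l ^ 2 - 2 * rn_mass r dr Kr Q l * r l + Q ^ 2).
Proof.
  intro Hr. unfold theta_prod, theta_plus, theta_minus, rn_mass, hawking_mass.
  field. exact Hr.
Qed.

Lemma Rdiv_eq_0_num x y : y <> 0 -> x / y = 0 -> x = 0.
Proof. intros Hy H. replace x with (x / y * y) by (field; exact Hy). rewrite H. ring. Qed.

Lemma mu_eq_0_ddr r dr ddr Kl Kr E l : r l <> 0 ->
  mu r dr ddr Kl Kr E l = 0 ->
  ddr l = (1 - dr l ^ 2) / (2 * r l) + r l * (2 * Kl l * Kr l + Kr l ^ 2 - E l ^ 2) / 2.
Proof.
  intros Hr Hmu. unfold mu, scal in Hmu.
  apply Rdiv_eq_0_num in Hmu; [|assert (PI > 0) by apply PI_RGT_0; lra].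
  apply (Rmult_eq_reg_l (4 * r l)); [|lra].
  field_simplify; [|exact Hr].
  assert (Hpoly : 2 * (1 - dr l ^ 2 - 2 * r l * ddr l)
            + r l ^ 2 * (4 * Kl l * Kr l + 2 * Kr l ^ 2 - 2 * E l ^ 2) = 0).
  { rewrite <- (Rmult_0_r (r l ^ 2)), <- Hmu. field. exact Hr. }
  lra.
Qed.

Lemma Jmom_eq_0_dKr r dr Kl Kr dKr l : r l <> 0 ->
  Jmom r dr Kl Kr dKr l = 0 -> dKr l = dr l * (Kl l - Kr l) / r l.
Proof.
  intros Hr HJ. unfold Jmom in HJ.
  apply Rdiv_eq_0_num in HJ; [|assert (PI > 0) by apply PI_RGT_0; lra].
  apply (Rmult_eq_reg_l (r l)); [|exact Hr].
  field_simplify; [|exact Hr].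
  assert (Hpoly : dr l * (Kl l - Kr l) - r l * dKr l = 0).
  { rewrite <- (Rmult_0_r (r l / 2)), <- HJ. field. exact Hr. }
  lra.
Qed.

Lemma rho_e_eq_0_dE r dr E dE l : r l <> 0 ->
  rho_e r dr E dE l = 0 -> dE l * r l ^ 2 + E l * (2 * r l * dr l) = 0.
Proof.
  intros Hr Hrho. unfold rho_e in Hrho.
  apply Rdiv_eq_0_num in Hrho;
    [|assert (PI > 0) by apply PI_RGT_0; apply Rmult_integral_contrapositive;
      split; [lra | now apply pow_nonzero]].
  rewrite <- Hrho. ring.
Qed.

Section Exterior.
Variables (r dr ddr Kl Kr dKr E dE : R -> R) (l0 : R).
Hypothesis Hr : forall l, derivable_pt_lim r l (dr l).
Hypothesis Hdr : forall l, derivable_pt_lim dr l (ddr l).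
Hypothesis HKr : forall l, derivable_pt_lim Kr l (dKr l).
Hypothesis HE : forall l, derivable_pt_lim E l (dE l).
Hypothesis Hrpos : forall l, 0 < l -> 0 < r l.
Hypothesis Hl0 : 0 < l0.
Hypothesis Hvac : forall l, l0 < l ->
  mu r dr ddr Kl Kr E l = 0 /\ Jmom r dr Kl Kr dKr l = 0 /\ rho_e r dr E dE l = 0.

Let Q := charge r E l0.

Lemma r_neq_0_exterior l : l0 <= l -> r l <> 0.
Proof. intro. assert (0 < r l) by (apply Hrpos; lra). lra. Qed.

Lemma charge_conserved l : l0 <= l -> E l * r l ^ 2 = Q.
Proof.
  apply (null_derivative_halfline (fun y => E y * r y ^ 2)).
  - apply derivable_continuous_pt. eexists. differentiate.
  - intros c Hc. eapply derivable_pt_lim_eq; [differentiate|].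
    destruct (Hvac c Hc) as [_ [_ Hrho]].
    apply (rho_e_eq_0_dE r dr E dE c); [apply r_neq_0_exterior; lra | exact Hrho].
Qed.

Lemma rn_mass_stationary c : l0 < c -> derivable_pt_lim (rn_mass r dr Kr Q) c 0.
Proof.
  intro Hc.
  assert (Hrc : r c <> 0) by (apply r_neq_0_exterior; lra).
  destruct (Hvac c Hc) as [Hmu [HJ _]].
  unfold rn_mass, hawking_mass.
  eapply derivable_pt_lim_eq; [differentiate|].
  all: try (unfold fct_cte; lra).
  rewrite <- (charge_conserved c (Rlt_le _ _ Hc)).
  rewrite (mu_eq_0_ddr r dr ddr Kl Kr E c Hrc Hmu), (Jmom_eq_0_dKr r dr Kl Kr dKr c Hrc HJ).
  unfold Rsqr. field. exact Hrc.
Qed.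

Lemma rn_mass_conserved l : l0 <= l -> rn_mass r dr Kr Q l = rn_mass r dr Kr Q l0.
Proof.
  apply null_derivative_halfline; [|exact rn_mass_stationary].
  assert (Hr0 : r l0 <> 0) by (apply r_neq_0_exterior; lra).
  unfold rn_mass, hawking_mass.
  apply derivable_continuous_pt. eexists. differentiate.
  all: unfold fct_cte; lra.
Qed.

Hypothesis HAF : forall B, exists L, forall l, L <= l -> B < r l.

Lemma hawking_mass_tends_to_rn_mass : forall eps, 0 < eps ->
  exists L, forall l, L <= l -> Rabs (hawking_mass r dr Kr l - rn_mass r dr Kr Q l0) < eps.
Proof.
  intros eps Heps. destruct (HAF (Q ^ 2 / (2 * eps))) as [L HL].
  exists (Rmax l0 L). intros l Hl.
  assert (Hl0l : l0 <= l) by (apply Rle_trans with (Rmax l0 L); [apply Rmax_l | exact Hl]).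
  assert (Hfar : Q ^ 2 / (2 * eps) < r l)
    by (apply HL, Rle_trans with (Rmax l0 L); [apply Rmax_r | exact Hl]).
  assert (Hrl : 0 < r l) by (apply Hrpos; lra).
  rewrite <- (rn_mass_conserved l Hl0l). unfold rn_mass.
  replace (hawking_mass r dr Kr l - (hawking_mass r dr Kr l + Q ^ 2 / (2 * r l)))
    with (- (Q ^ 2 / (2 * r l))) by ring.
  rewrite Rabs_Ropp, Rabs_right.
  - apply Rmult_lt_reg_r with (2 * r l); [lra|].
    apply Rmult_lt_reg_l with (/ (2 * eps)); [apply Rinv_0_lt_compat; lra|].
    replace (/ (2 * eps) * (Q ^ 2 / (2 * r l) * (2 * r l))) with (Q ^ 2 / (2 * eps))
      by (field; lra).
    replace (/ (2 * eps) * (eps * (2 * r l))) with (r l) by (field; lra).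
    exact Hfar.
  - apply Rle_ge, Rmult_le_pos; [apply pow2_ge_0 | left; apply Rinv_0_lt_compat; lra].
Qed.

Variable M : R.
Hypothesis HM : is_ADM_mass r dr Kr M.
Hypothesis HQM : Rabs Q <= M.

Lemma theta_prod_exterior l : l0 <= l ->
  theta_prod r dr Kr l * r l ^ 4 = 4 * (r l ^ 2 - 2 * M * r l + Q ^ 2).
Proof.
  intro Hl.
  rewrite (theta_prod_rn_mass r dr Kr Q l (r_neq_0_exterior l Hl)), (rn_mass_conserved l Hl).
  now rewrite (limit_at_infinity_unique _ _ _ hawking_mass_tends_to_rn_mass HM).
Qed.

Lemma theta_prod_pos_exterior l : l0 <= l -> r_plus M Q < r l -> 0 < theta_prod r dr Kr l.
Proof.
  intros Hl Hrl. assert (Htheta := theta_prod_exterior l Hl).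
  assert (Hpos := rn_quadratic_pos M Q (r l) HQM Hrl).
  assert (0 < r l ^ 4) by (apply pow_lt, Hrpos; lra).
  nra.
Qed.

Lemma theta_prod_r_plus l : l0 <= l -> r l = r_plus M Q -> theta_prod r dr Kr l = 0.
Proof.
  intros Hl Hrl. assert (Htheta := theta_prod_exterior l Hl).
  assert (Hroot : r l ^ 2 - 2 * M * r l + Q ^ 2 = 0)
    by (rewrite Hrl; exact (rn_quadratic_r_plus M Q HQM)).
  rewrite Hroot, Rmult_0_r in Htheta.
  apply Rmult_integral in Htheta as [|Hr4]; [assumption|].
  exfalso. apply (pow_nonzero (r l) 4 (r_neq_0_exterior l Hl) Hr4).
Qed.

Lemma r_continuous : continuity r.
Proof. intro x. exact (derivable_continuous_pt r x (exist _ (dr x) (Hr x))). Qed.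

Lemma r_plus_lt_of_untrapped : untrapped_exterior r dr Kr l0 -> r_plus M Q < r l0.
Proof.
  intro Hun. destruct (Rlt_or_le (r_plus M Q) (r l0)) as [|Hle]; [assumption|].
  destruct (level_reached r r_continuous HAF l0 _ Hle) as [z [Hz Hrz]].
  specialize (Hun z Hz). rewrite (theta_prod_r_plus z Hz Hrz) in Hun. lra.
Qed.

Lemma horizon_of_not_untrapped : ~ untrapped_exterior r dr Kr l0 ->
  exists l1, l0 <= l1 /\ r l1 = r_plus M Q /\
    (forall l, l0 <= l -> r l = r_plus M Q -> l <= l1) /\ is_horizon r dr Kr l1.
Proof.
  intro Htrapped.
  assert (Hbelow : exists l, l0 <= l /\ r l <= r_plus M Q).
  { apply NNPP. intro Hnone. apply Htrapped. intros l Hl.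
    apply theta_prod_pos_exterior; [exact Hl|].
    apply Rnot_le_lt. intro Hle. apply Hnone. now exists l. }
  destruct Hbelow as [l [Hl Hle]].
  destruct (level_reached r r_continuous HAF l _ Hle) as [x0 [Hx0 Hrx0]].
  destruct (last_level r r_continuous HAF l0 (r_plus M Q)) as [l1 [Hl1 [Hrl1 Hlast]]];
    [exists x0; split; [lra | exact Hrx0]|].
  exists l1. repeat split; try assumption.
  - exact (theta_prod_r_plus l1 Hl1 Hrl1).
  - intros l' Hl'. apply theta_prod_pos_exterior; [lra|].
    apply Rnot_le_lt. intro Hle'.
    destruct (level_reached r r_continuous HAF l' _ Hle') as [z [Hz Hrz]].
    specialize (Hlast z ltac:(lra) Hrz). lra.
Qed.

End Exterior.

Theorem mainTheorem5
  (r dr ddr Kl Kr dKr E dE : R -> R) (l0 M : R)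
  (Hr : forall l, derivable_pt_lim r l (dr l))
  (Hdr : forall l, derivable_pt_lim dr l (ddr l))
  (HKr : forall l, derivable_pt_lim Kr l (dKr l))
  (HKl : forall l, continuity_pt Kl l)
  (HE : forall l, derivable_pt_lim E l (dE l))
  (Hr0 : r 0 = 0) (Hdr0 : dr 0 = 1)
  (Hrpos : forall l, 0 < l -> 0 < r l)
  (Hl0 : 0 < l0)
  (HAF : forall B, exists L, forall l, L <= l -> B < r l)
  (HM : is_ADM_mass r dr Kr M)
  (Hvac : forall l, l0 < l ->
     mu r dr ddr Kl Kr E l = 0 /\ Jmom r dr Kl Kr dKr l = 0 /\
     rho_e r dr E dE l = 0)
  (HDEC : forall l, 0 < l <= l0 ->
     Rabs (Jmom r dr Kl Kr dKr l) <= mu r dr ddr Kl Kr E l)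
  (HQ : charge r E l0 <> 0)
  (HMQ : Rabs (charge r E l0) <= M) :
  (untrapped_exterior r dr Kr l0 ->
     r_plus M (charge r E l0) < r l0 /\
     Rabs (charge r E l0) <= r_plus M (charge r E l0) /\
     Rabs (charge r E l0) < r l0)
  /\
  (~ untrapped_exterior r dr Kr l0 ->
     exists l1, l0 <= l1 /\ r l1 = r_plus M (charge r E l0) /\
       (forall l, l0 <= l -> r l = r_plus M (charge r E l0) -> l <= l1) /\
       is_horizon r dr Kr l1).
Proof.
  split.
  - intro Hun.
    assert (Hlt := r_plus_lt_of_untrapped r dr ddr Kl Kr dKr E dE l0
                     Hr Hdr HKr HE Hrpos Hl0 Hvac HAF M HM HMQ Hun).
    assert (Habs := abs_le_r_plus M (charge r E l0) HMQ).
    repeat split; lra.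
  - exact (horizon_of_not_untrapped r dr ddr Kl Kr dKr E dE l0
             Hr Hdr HKr HE Hrpos Hl0 Hvac HAF M HM HMQ).
Qed.
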